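(* Consider $1$-private $5$-server HSS for $\mathsf{CONCAT}_4(\mathbb{F}_2)$. (i) There is an $\mathbb{F}_2$-linear such HSS whose $\mathsf{Share}$ is $1$-private $5$-party CNF sharing over $\mathbb{F}_2$ and in which each server's output share is a single bit (download cost $5$ bits). (ii) There is no $\mathbb{F}_2$-linear such HSS in which each of the $4$ secrets in $\mathbb{F}_2$ is shared independently by $1$-private $5$-party Shamir sharing over $\mathbb{E}=\mathbb{F}_8$ (for any choice of distinct evaluation points $\alpha_0,\dots,\alpha_5\in\mathbb{F}_8$) and in which each server's output share is a single bit.
   Context: $\mathsf{CONCAT}_\ell(\mathcal{X})$: the class consisting of the identity map $\mathcal{X}^\ell\to\mathcal{X}^\ell$, with $\ell$ inputs each shared independently. A $k$-server HSS $(\mathsf{Share},\mathsf{Eval},\mathsf{Rec})$: randomized $\mathsf{Share}$ splits each input into $k$ shares; server $j$ computes its output share from its input shares; $\mathsf{Rec}$ of the output shares recovers the output with probability 1; $1$-private if each single server's input shares are distributed independently of the input. $\mathbb{F}_2$-linear: $\mathsf{Share}$ is $\mathbb{F}_2$-linear in the input and uniform random bits, output shares are vectors over $\mathbb{F}_2$, and $\mathsf{Rec}$ is $\mathbb{F}_2$-linear. $1$-private $k$-party CNF sharing of $x\in\mathbb{F}_2$: uniform $x_1,\dots,x_k\in\mathbb{F}_2$ with $\sum_ix_i=x$, party $j$ gets $(x_i)_{i\ne j}$. $1$-private Shamir sharing over $\mathbb{E}\supseteq\mathbb{F}_2$ with distinct $\alpha_0,\dots,\alpha_k\in\mathbb{E}$: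 random $p\in\mathbb{E}[X]$ with $\deg p\le1$ and $p(\alpha_0)=x$; party $j$ gets $p(\alpha_j)$. *)

From mathcomp Require Import all_boot all_order all_algebra all_field.
Set Implicit Arguments. Unset Strict Implicit. Unset Printing Implicit Defensive.
Import GRing.Theory.
Local Open Scope ring_scope.

(* 1-private 5-party CNF sharing: secret l is split as a l 0 + ... + a l 4 = x l;
   server j receives (a l i)_{i <> j}, indexed by k : 'I_4 via i = lift j k. *)
Definition is_cnf_sharing (x : 'I_4 -> 'F_2) (a : 'I_4 -> 'I_5 -> 'F_2) : Prop :=
  forall l : 'I_4, \sum_(i < 5) a l i = x l.

Definition cnf_share (a : 'I_4 -> 'I_5 -> 'F_2) (j : 'I_5) : 'I_4 -> 'I_4 -> 'F_2 :=
  fun l k => a l (lift j k).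

Definition F2toE (E : fieldType) (b : 'F_2) : E := (nat_of_ord b)%:R.

(* 1-private Shamir sharing over E with points alpha 0 (secret), alpha (lift 0 j) (server j):
   a polynomial p l of degree <= 1 with p(alpha_0) = x_l; server j gets p l (alpha_j). *)
Definition is_shamir_sharing (E : fieldType) (alpha : 'I_6 -> E)
    (x : 'I_4 -> 'F_2) (p : 'I_4 -> {poly E}) : Prop :=
  forall l : 'I_4, (size (p l) <= 2)%N /\ (p l).[alpha ord0] = F2toE E (x l).

Definition shamir_share (E : fieldType) (alpha : 'I_6 -> E) (p : 'I_4 -> {poly E})
    (j : 'I_5) : 'I_4 -> E :=
  fun l => (p l).[alpha (lift ord0 j)].

From mathcomp Require Import all_boot all_order all_algebra all_field.
From mathcomp Require Import ring.
From Stdlib Require Import FunctionalExtensionality.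
Set Implicit Arguments.
Unset Strict Implicit.
Unset Printing Implicit Defensive.

Import GRing.Theory.
Local Open Scope ring_scope.

(* (i) In CNF sharing server j misses only column j of the shares, so it can
   output any linear form of the shares that ignores column j; the forms below
   recover each secret as the difference of two outputs.
   (ii) With Shamir sharing of degree 1 server j holds x + s b_j, where
   b_j = alpha_j - alpha_0 != 0.  No nonzero F_2-combination of the secrets can
   be read off a single server, so for every server j > 0 some combination c_j
   is reconstructed from servers 0 and j alone.  Moving the randomness so that
   server j's input stays fixed shows that the output of server 0 changes by
   the linear form c_j when its input moves along 1 - b_0 / b_j.  Hence the
   2^n F_2-combinations of these n directions have distinct images under
   server 0, so they are distinct elements of E, and 2^n <= |E|. *)

Section CNFSharing.

Variables (K : pzRingType) (n : nat).

Definition cnf_view (a : 'I_n -> 'I_n.+1 -> K) (j : 'I_n.+1) : 'I_n -> 'I_n -> K :=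
  fun l k => a l (lift j k).

Definition cnf_local (c : 'I_n -> 'I_n.+1 -> K) (j : 'I_n.+1)
    (v : 'I_n -> 'I_n -> K) : K :=
  \sum_l \sum_k v l k * c l (lift j k).

Lemma cnf_localE c j a : (forall l, c l j = 0) ->
  cnf_local c j (cnf_view a j) = \sum_l \sum_i a l i * c l i.
Proof.
move=> c_j; apply: eq_bigr => l _.
by rewrite [RHS](bigD1_ord j) //= c_j mulr0 add0r.
Qed.

Definition cnf_diag (l : 'I_n) : 'I_n.+1 := lift ord_max l.

(* With d_l := a l (cnf_diag l), server cnf_diag l outputs
   x_l - d_l - \sum_(l' != l) d_l' and server ord_max outputs - \sum_l d_l. *)
Definition cnf_coef (j : 'I_n.+1) (l : 'I_n) (i : 'I_n.+1) : K :=
  if cnf_diag l == j then (i != j)%:R else - (i == cnf_diag l)%:R.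

Definition cnf_eval (j : 'I_n.+1) : ('I_n -> 'I_n -> K) -> K :=
  cnf_local (cnf_coef j) j.

Definition cnf_rec : 'M[K]_(n.+1, n) :=
  \matrix_(j, l) ((j == cnf_diag l)%:R - (j == ord_max)%:R).

Lemma cnf_coef_own j l : cnf_coef j l j = 0.
Proof.
by rewrite /cnf_coef eqxx; case: eqP => [//|ne]; rewrite eq_sym (introF eqP ne) oppr0.
Qed.

Lemma sum_mul_eq (T : finType) (F : T -> K) t : \sum_s F s * (s == t)%:R = F t.
Proof.
by rewrite (bigD1 t) //= eqxx mulr1 big1 ?addr0 // => s /negbTE ->; rewrite mulr0.
Qed.

Lemma cnf_coef_rec l i l0 : \sum_j cnf_coef j l i * cnf_rec j l0 = (l == l0)%:R.
Proof.
under eq_bigr do rewrite mxE mulrBr.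
rewrite sumrB !sum_mul_eq /cnf_coef /cnf_diag (inj_eq lift_inj).
have /negbTE -> : lift ord_max l != ord_max by rewrite eq_sym neq_lift.
case: (eqVneq l l0) => [->|_]; last by rewrite subrr.
by rewrite opprK; case: (i == lift ord_max l0); rewrite ?add0r ?addr0.
Qed.

Lemma cnf_hssE a :
  (\row_j cnf_eval j (cnf_view a j)) *m cnf_rec = \row_l \sum_i a l i.
Proof.
apply/rowP => l0; rewrite !mxE.
transitivity (\sum_j \sum_l \sum_i a l i * (cnf_coef j l i * cnf_rec j l0)).
  apply: eq_bigr => j _; rewrite mxE [cnf_eval _ _](cnf_localE _ (cnf_coef_own j)).
  rewrite mulr_suml; apply: eq_bigr => l _.
  by rewrite mulr_suml; apply: eq_bigr => i _; rewrite mulrA.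
rewrite exchange_big -(sum_mul_eq (fun l => \sum_i a l i) l0) /=.
apply: eq_bigr => l _; rewrite exchange_big mulr_suml.
by apply: eq_bigr => i _; rewrite -mulr_sumr cnf_coef_rec.
Qed.

End CNFSharing.

Lemma cV_eq_row' (K : pzRingType) m (z w : 'cV[K]_m.+1) j :
  row' j z = row' j w -> z = w + (z j 0 - w j 0) *: delta_mx j 0.
Proof.
move=> zw; apply/matrixP => i o; rewrite (ord1 o) {o} !mxE.
case: (unliftP j i) => [i' ->|->]; last by rewrite !eqxx mulr1 addrC subrK.
move/matrixP/(_ i' 0): zw; rewrite !mxE => ->.
by rewrite eq_sym (negbTE (neq_lift _ _)) mulr0 addr0.
Qed.

Lemma row_const0 (K : pzSemiRingType) m : \row_(i < m) (0 : K) = 0.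
Proof. by apply/rowP => i; rewrite !mxE. Qed.

Lemma F2_eq0_or1 (v : 'F_2) : v = 0 \/ v = 1.
Proof. by case: v => [[|[|//]]] ?; [left|right]; apply: val_inj. Qed.

Lemma F2toE0 (E : fieldType) : F2toE E 0 = 0.
Proof. by []. Qed.

(* The share of x at alpha_j for the line x + s (X - alpha_0), with
   b j = alpha_j - alpha_0. *)
Definition affine_share (E : fieldType) n (b : 'I_n.+1 -> E)
    (j : 'I_n.+1) (x : 'I_n -> 'F_2) (s : 'I_n -> E) : 'I_n -> E :=
  fun l => F2toE E (x l) + s l * b j.

Section AffineShareHSS.

Variables (E : finFieldType) (n : nat) (b : 'I_n.+1 -> E).
Hypothesis b_neq0 : forall j, b j != 0.

Variables (Eval : forall j : 'I_n.+1, ('I_n -> E) -> 'F_2) (R : 'M['F_2]_(n.+1, n)).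
Hypothesis Eval_rec : forall x s,
  (\row_j Eval j (affine_share b j x s)) *m R = \row_l x l.

Lemma Eval_dot x s (c : 'cV_n) :
  (\row_j Eval j (affine_share b j x s)) *m (R *m c) = (\row_l x l) *m c.
Proof. by rewrite mulmxA Eval_rec. Qed.

Lemma Eval_single (c : 'cV_n) j v x s : R *m c = v *: delta_mx j 0 ->
  v * Eval j (affine_share b j x s) = ((\row_l x l) *m c) 0 0.
Proof. by move=> Rc; rewrite -(Eval_dot x s) Rc -scalemxAr -colE !mxE. Qed.

Lemma Eval_pair (c : 'cV_n) j1 j2 x s : R *m c = delta_mx j1 0 + delta_mx j2 0 ->
  Eval j1 (affine_share b j1 x s) + Eval j2 (affine_share b j2 x s) =
  ((\row_l x l) *m c) 0 0.
Proof. by move=> Rc; rewrite -(Eval_dot x s) Rc mulmxDr -!colE !mxE. Qed.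

Lemma rec_single_server (c : 'cV_n) j v : R *m c = v *: delta_mx j 0 -> c = 0.
Proof.
move=> Rc; apply/matrixP => l o; rewrite (ord1 o) mxE {o}.
pose e_l (l' : 'I_n) : 'F_2 := (l' == l)%:R.
(* Server j cannot tell the secret e_l from the secret 0. *)
have same_share : affine_share b j e_l (fun _ => 0) =
                  affine_share b j (fun _ => 0) (fun l' => F2toE E (e_l l') / b j).
  apply: functional_extensionality => l'.
  by rewrite /affine_share mul0r addr0 add0r divfK.
have row_e_l : \row_l' e_l l' = delta_mx 0 l :> 'rV_n by apply/rowP => l'; rewrite !mxE.
transitivity (((\row_l' e_l l') *m c) 0 0); first by rewrite row_e_l -rowE mxE.
rewrite -(Eval_single _ (fun _ => 0) Rc) same_share (Eval_single _ _ Rc).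
by rewrite row_const0 mul0mx mxE.
Qed.

Lemma rec_server_pair (k : 'I_n) :
  exists c : 'cV_n, R *m c = delta_mx 0 0 + delta_mx (lift 0 k) 0.
Proof.
set j := lift 0 k.
have rest_inj : injective (fun c : 'cV_n => row' j (R *m c)).
  move=> c1 c2 /cV_eq_row' Rc12; apply/eqP; rewrite -subr_eq0; apply/eqP.
  by apply: (@rec_single_server _ j (_ - _)); rewrite mulmxBr Rc12 addrC addKr.
have [g _ gK] := injF_bij rest_inj.
set c := g (row' j (delta_mx 0 0)); exists c.
have /cV_eq_row' Rc := gK (row' j (delta_mx 0 0)).
have e0_j : (delta_mx 0 0 : 'cV['F_2]_n.+1) j 0 = 0.
  by rewrite mxE eq_sym (negbTE (neq_lift 0 k)).
rewrite -/c e0_j subr0 in Rc.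
have [Rc_j0|Rc_j1] := F2_eq0_or1 ((R *m c) j 0); last by rewrite Rc Rc_j1 scale1r.
have c0 : c = 0.
  by apply: (@rec_single_server _ 0 1); rewrite Rc Rc_j0 scale0r addr0 scale1r.
exfalso; move: Rc; rewrite c0 mulmx0 => /matrixP/(_ 0 0).
by rewrite !mxE !eqxx mul0r addr0 => /esym/eqP; rewrite oner_eq0.
Qed.

Definition pair_dir (k : 'I_n) : E := 1 - b 0 / b (lift 0 k).

Lemma Eval0_shift (c : 'cV_n) k v x :
  R *m c = delta_mx 0 0 + delta_mx (lift 0 k) 0 ->
  Eval 0 (fun l => v l + pair_dir k * F2toE E (x l)) =
  Eval 0 v + ((\row_l x l) *m c) 0 0.
Proof.
move=> Rc; set j := lift 0 k.
(* Server j gets the same input from (x, s1) as from (0, s2), while server 0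
   gets v + pair_dir k * x and v respectively. *)
pose s2 l := v l / b 0.
pose s1 l := s2 l - F2toE E (x l) / b j.
have := Eval_pair x s1 Rc; have := Eval_pair (fun _ => 0) s2 Rc.
have -> : affine_share b j x s1 = affine_share b j (fun _ => 0) s2.
  apply: functional_extensionality => l; rewrite /affine_share /s1 /s2 F2toE0.
  by field; rewrite !b_neq0.
have -> : affine_share b 0 (fun _ => 0) s2 = v.
  apply: functional_extensionality => l; rewrite /affine_share /s2 F2toE0.
  by field; rewrite b_neq0.
have -> : affine_share b 0 x s1 = fun l => v l + pair_dir k * F2toE E (x l).
  apply: functional_extensionality => l; rewrite /affine_share /s1 /s2 /pair_dir.
  by field; rewrite !b_neq0.
rewrite row_const0 mul0mx mxE => Ev0 Ev1.
apply: (addIr (Eval j (affine_share b j (fun _ => 0) s2))).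
by rewrite Ev1 addrAC Ev0 add0r.
Qed.

Definition coord_vec (T : zmodType) (l : 'I_n) (t : T) : 'I_n -> T :=
  fun l' => if l' == l then t else 0.

Definition dir_comb (a : {ffun 'I_n -> 'F_2}) : E := \sum_k F2toE E (a k) * pair_dir k.

Section PairVectors.

Variable cf : 'I_n -> 'cV['F_2]_n.
Hypothesis cfP : forall k, R *m cf k = delta_mx 0 0 + delta_mx (lift 0 k) 0.

Definition pair_comb (a : {ffun 'I_n -> 'F_2}) : 'cV_n := \sum_k a k *: cf k.

Lemma Eval0_coord_shift l k t e :
  Eval 0 (coord_vec l (F2toE E t * pair_dir k + e)) =
  Eval 0 (coord_vec l e) + t * cf k l 0.
Proof.
have -> : coord_vec l (F2toE E t * pair_dir k + e) =
          fun l' => coord_vec l e l' + pair_dir k * F2toE E (coord_vec l t l').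
  apply: functional_extensionality => l'; rewrite /coord_vec.
  by case: (l' == l); rewrite ?F2toE0 ?mulr0 ?addr0 // addrC mulrC.
rewrite (Eval0_shift _ _ (cfP k)); congr (_ + _).
rewrite mxE (bigD1 l) //= big1 => [|l' /negbTE l'l].
  by rewrite !mxE /coord_vec eqxx addr0.
by rewrite !mxE /coord_vec l'l mul0r.
Qed.

Lemma Eval0_dir_comb l a :
  Eval 0 (coord_vec l (dir_comb a)) = Eval 0 (coord_vec l 0) + pair_comb a l 0.
Proof.
rewrite /pair_comb summxE; under [X in _ + X]eq_bigr do rewrite mxE.
apply: (big_rec2 (fun e z => Eval 0 (coord_vec l e) = Eval 0 (coord_vec l 0) + z)).
  by rewrite addr0.
by move=> k e z _ IH; rewrite Eval0_coord_shift IH -addrA [z + _]addrC.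
Qed.

Lemma rec_pair_comb a k : (R *m pair_comb a) (lift 0 k) 0 = a k.
Proof.
rewrite mulmx_sumr summxE (bigD1 k) //= big1 => [|k' k'k].
  rewrite -scalemxAr cfP !mxE eq_sym (negbTE (neq_lift _ _)).
  by rewrite !eqxx add0r mulr1 addr0.
rewrite -scalemxAr cfP !mxE eq_sym (negbTE (neq_lift _ _)) (inj_eq lift_inj).
by rewrite eq_sym (negbTE k'k) addr0 mulr0.
Qed.

Lemma dir_comb_inj : injective dir_comb.
Proof.
move=> a a' eq_aa'; apply/ffunP => k.
rewrite -!(rec_pair_comb _ k); congr ((R *m _) (lift 0 k) 0).
apply/matrixP => l o; rewrite (ord1 o) {o}.
by apply: (@addrI _ (Eval 0 (coord_vec l 0))); rewrite -!Eval0_dir_comb eq_aa'.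
Qed.

End PairVectors.

Lemma affine_share_hss_card : (2 ^ n <= #|E|)%N.
Proof.
have [cf cfP] := fin_all_exists rec_server_pair.
by have := leq_card _ (dir_comb_inj cfP); rewrite card_ffun card_Fp // card_ord.
Qed.

End AffineShareHSS.

Section ShamirLines.

Variables (E : fieldType) (alpha : 'I_6 -> E) (x : 'I_4 -> 'F_2) (s : 'I_4 -> E).

Definition shamir_line : 'I_4 -> {poly E} :=
  fun l => (F2toE E (x l))%:P + (s l)%:P * ('X - (alpha 0)%:P).

Lemma shamir_line_sharing : is_shamir_sharing alpha x shamir_line.
Proof.
move=> l; split; last by rewrite !hornerE subrr mulr0 addr0.
rewrite (leq_trans (size_polyD _ _)) // geq_max size_polyC (leq_trans (leq_b1 _)) //=.
by rewrite (leq_trans (size_polyMleq _ _)) // size_XsubC size_polyC; case: (_ != 0).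
Qed.

Lemma shamir_share_line j :
  shamir_share alpha shamir_line j =
  affine_share (fun j => alpha (lift 0 j) - alpha 0) j x s.
Proof. by apply: functional_extensionality => l; rewrite /shamir_share !hornerE. Qed.

End ShamirLines.

Theorem mainTheorem19 :
  (exists (Eval : forall j : 'I_5, ('I_4 -> 'I_4 -> 'F_2) -> 'F_2)
          (R : 'M['F_2]_(5, 4)),
      forall (x : 'I_4 -> 'F_2) (a : 'I_4 -> 'I_5 -> 'F_2),
        is_cnf_sharing x a ->
        (\row_(j < 5) Eval j (cnf_share a j)) *m R = \row_(l < 4) x l)
  /\
  (forall (E : finFieldType), #|E| = 8%N ->
   forall alpha : 'I_6 -> E, injective alpha ->
   ~ (exists (Eval : forall j : 'I_5, ('I_4 -> E) -> 'F_2)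
             (R : 'M['F_2]_(5, 4)),
        forall (x : 'I_4 -> 'F_2) (p : 'I_4 -> {poly E}),
          is_shamir_sharing alpha x p ->
          (\row_(j < 5) Eval j (shamir_share alpha p j)) *m R = \row_(l < 4) x l)).
Proof.
split.
  exists (@cnf_eval 'F_2 4), (cnf_rec 'F_2 4) => x a a_x.
  by rewrite cnf_hssE; apply/rowP => l; rewrite !mxE a_x.
move=> E card_E alpha alpha_inj [Eval [R hss]].
pose b (j : 'I_5) := alpha (lift 0 j) - alpha 0.
have b_neq0 j : b j != 0 by rewrite subr_eq0 (inj_eq alpha_inj) eq_sym neq_lift.
have Eval_rec x s : (\row_j Eval j (affine_share b j x s)) *m R = \row_l x l.
  rewrite -(hss x (shamir_line alpha x s)); last exact: shamir_line_sharing.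
  by congr (_ *m _); apply/rowP => j; rewrite !mxE shamir_share_line.
by have := affine_share_hss_card b_neq0 Eval_rec; rewrite card_E.
Qed.
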